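(* Let $(V,u_r)$ be a strongly adapted homogeneous feedback pair (sAHFP) for the pure chain of integrators of order $r$, with parameters $\kappa$, $\gamma_r$. Then there exist constants $C_0,C_1>0$ such that for every $\eta>0$ and every $z\in\mathbb{R}^r$, $$|\partial_rV(z)|\le C_0\,\eta^{1+\frac\kappa2}+C_1\frac{|u_r(z)\partial_rV(z)|}{\eta^{\gamma_r(1+\frac\kappa2)}}.$$
   Context: Fix an integer $r\ge2$. Let $e_1,\dots,e_r$ be the canonical basis of $\mathbb{R}^r$ and $J_r$ the $r\times r$ matrix with $J_re_1=0$ and $J_re_i=e_{i-1}$ for $2\le i\le r$. For $a>0$, $\lfloor x\rceil^a:=|x|^a\,\mathrm{sgn}(x)$. $\partial_jV$ is the partial derivative of $V$ in $z_j$. Weights and dilations: given $\kappa\in(-1,0)$ and $p\in(0,2)$, set $p_i=p+(i-1)\kappa$ for $1\le i\le r+1$, and $\delta_\lambda(z)=(\lambda^{p_1}z_1,\dots,\lambda^{p_r}z_r)$ for $\lambda>0$. A function $f$ is homogeneous of degree $q$ if $f(\delta_\lambda(z))=\lambda^qf(z)$ for all $\lambda>0,z$. AHFP: a pair $(V,u_r)$ with $V:\mathbb{R}^r\to[0,\infty)$, $u_r:\mathbb{R}^r\to\mathbb{R}$ is an adapted homogeneous feedback pair if there exist $\kappa\in(-1,0)$, $p\in(0,2)$ with $p_{r+1}>0$ such that: $u_r$ is continuous, $u_r(0)=0$, homogeneous of degree $p_{r+1}$; $V$ is $C^1$, positive definite and homogeneous of degree $2$; there exist a continuous $\rho$ and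 constants $0<c_r\le d_r$ with $c_r\le\rho\le d_r$ and $\langle\nabla V(z),J_rz+u_r(z)e_r\rangle=-\rho(z)V(z)^{1+\frac\kappa2}$ for all $z$; and $u_r(z)\partial_rV(z)\le0$ for all $z$. It is strongly adapted (sAHFP) if moreover $u_r(z)=-l_r\lfloor\partial_rV(z)\rceil^{\gamma_r}$ for some constants $l_r>0$, $\gamma_r>0$. *)

From HB Require Import structures.
From mathcomp Require Import all_boot all_order all_algebra.
From mathcomp Require Import all_classical all_reals all_analysis.
Set Implicit Arguments. Unset Strict Implicit. Unset Printing Implicit Defensive.
Import Order.TTheory GRing.Theory Num.Theory.
Import numFieldNormedType.Exports.
Local Open Scope ring_scope.

Section AHFP.
Variable R : realType.

(* State space R^r as column vectors 'cV[R]_r; coordinate i (0-indexed) is z i 0. *)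

Definition evec (r : nat) (i : 'I_r) : 'cV[R]_r := delta_mx i 0.

(* J_r : J e_1 = 0, J e_i = e_{i-1}  (i.e. entry (i,j) = 1 iff j = i+1, 0-indexed) *)
Definition Jmat (r : nat) : 'M[R]_r := \matrix_(i, j) ((j == i.+1 :> nat)%:R).

Definition partial (r : nat) (V : 'cV[R]_r -> R) (j : 'I_r) (z : 'cV[R]_r) : R :=
  'D_(evec j) V z.

Definition sgnpow (x a : R) : R := Num.sg x * (`|x| `^ a).

(* weights p_i = p + (i-1) kappa, with i = k+1 for 0-indexed k *)
Definition weight (p kappa : R) (k : nat) : R := p + k%:R * kappa.

Definition dil (r : nat) (p kappa lam : R) (z : 'cV[R]_r) : 'cV[R]_r :=
  \col_i (lam `^ (weight p kappa i) * z i 0).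

Definition homogeneous (r : nat) (p kappa : R) (f : 'cV[R]_r -> R) (q : R) :=
  forall (lam : R) (z : 'cV[R]_r), 0 < lam -> f (dil p kappa lam z) = lam `^ q * f z.

Definition C1 (r : nat) (V : 'cV[R]_r -> R) :=
  (forall z, differentiable V z) /\ (forall j, continuous (partial V j)).

Definition posdef (r : nat) (V : 'cV[R]_r -> R) :=
  V 0 = 0 /\ forall z, z != 0 -> 0 < V z.

Definition graddot (r : nat) (V : 'cV[R]_r -> R) (z w : 'cV[R]_r) : R :=
  \sum_(j < r) partial V j z * w j 0.

(* Adapted homogeneous feedback pair with explicit parameters kappa, p,
   for the chain of integrators of order r = n.+2 (so r >= 2). *)
Definition AHFP (n : nat) (V : 'cV[R]_n.+2 -> R) (u : 'cV[R]_n.+2 -> R)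
    (kappa p : R) : Prop :=
  [/\ (-1 < kappa < 0) /\ (0 < p < 2), 0 < weight p kappa n.+2,
      [/\ continuous u, u 0 = 0 & homogeneous p kappa u (weight p kappa n.+2)],
      [/\ forall z, 0 <= V z, C1 V, posdef V & homogeneous p kappa V 2] /\
      (exists (rho : 'cV[R]_n.+2 -> R) (c d : R),
         [/\ continuous rho, 0 < c, c <= d,
             forall z, c <= rho z <= d &
             forall z, graddot V z (Jmat n.+2 *m z + u z *: evec ord_max)
                       = - rho z * (V z `^ (1 + kappa / 2))])
    & forall z, u z * partial V ord_max z <= 0].

Definition sAHFP (n : nat) (V : 'cV[R]_n.+2 -> R) (u : 'cV[R]_n.+2 -> R)
    (kappa p l gamma : R) : Prop :=
  [/\ AHFP V u kappa p, 0 < l, 0 < gamma &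
      forall z, u z = - l * sgnpow (partial V ord_max z) gamma].

End AHFP.

From HB Require Import structures.
From mathcomp Require Import all_boot all_order all_algebra.
From mathcomp Require Import all_classical all_reals all_analysis.
Import Order.TTheory GRing.Theory Num.Theory.
Import numFieldNormedType.Exports.
Local Open Scope ring_scope.

(* For a strongly adapted feedback, |u_r d_r V| = l_r |d_r V|^(gamma_r + 1).
   Put e = eta^(1 + kappa/2): either |d_r V| <= e, or |d_r V| > e and then
   |d_r V| = |d_r V|^(gamma_r + 1) / |d_r V|^gamma_r <= |u_r d_r V| / (l_r e^gamma_r).
   Hence C0 = 1 and C1 = 1/l_r work. *)

Lemma norm_sgnpowM (R : realType) (x a : R) :
  `|sgnpow x a * x| = `|x| `^ a * `|x|.
Proof.
have [->|x0] := eqVneq x 0; first by rewrite !(mulr0, normr0).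
by rewrite /sgnpow !normrM normr_sg x0 mul1r ger0_norm ?powR_ge0.
Qed.

Lemma ler_addl_powR_div (R : realType) (gamma e x : R) :
  0 <= gamma -> 0 < e -> 0 <= x -> x <= e + x `^ gamma * x / e `^ gamma.
Proof.
move=> gamma0 e0 x0.
have eg0 : 0 < e `^ gamma by apply: powR_gt0.
have [xe|ex] := leP x e.
  by rewrite -[X in X <= _]addr0 lerD // divr_ge0 ?mulr_ge0 ?powR_ge0.
have egx : e `^ gamma <= x `^ gamma.
  by apply: ge0_ler_powR; rewrite ?nnegrE // ltW.
rewrite -[X in X <= _]add0r lerD ?(ltW e0) // ler_pdivlMr // mulrC.
exact: ler_wpM2r.
Qed.

Theorem lemma2 (R : realType) (n : nat) (V u : 'cV[R]_n.+2 -> R)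
    (kappa p l gamma : R) :
  sAHFP V u kappa p l gamma ->
  exists C0 C1 : R, 0 < C0 /\ 0 < C1 /\
    forall (eta : R) (z : 'cV[R]_n.+2), 0 < eta ->
      `|partial V ord_max z|
        <= C0 * eta `^ (1 + kappa / 2)
           + C1 * `|u z * partial V ord_max z| / eta `^ (gamma * (1 + kappa / 2)).
Proof.
case=> _ l0 gamma0 hu.
exists 1, l^-1; do 2!split => //; first by rewrite invr_gt0.
move=> eta z eta0.
set d := partial V ord_max z.
have hud : `|u z * d| = l * (`|d| `^ gamma * `|d|).
  by rewrite hu -mulrA normrM normrN (gtr0_norm l0) norm_sgnpowM.
rewrite hud mulKf ?gt_eqF // mul1r [gamma * _]mulrC powRrM.
exact: ler_addl_powR_div (ltW gamma0) (powR_gt0 _ eta0) (normr_ge0 d).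
Qed.
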